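(* Let $\varphi$ be a finite conjunction of literals of the two forms $x\in y$ and $x = y\setminus z$ (with $x,y,z$ set variables), with finite set of variables $\mathrm{Vars}(\varphi)$. Let $M$ be a set assignment over $\mathrm{Vars}(\varphi)$ satisfying $\varphi$; let $\bar x,\bar y\in\mathrm{Vars}(\varphi)$, let $\overline{M}$ be a set assignment over $\mathrm{Vars}(\varphi)$ satisfying $\varphi$ with $\overline{M}\bar x\neq \overline{M}\bar y$, and let $\mathfrak{t}$ be a set belonging to exactly one of $\overline{M}\bar x$, $\overline{M}\bar y$. Fix a set $\mathfrak{s}$ with $\mathrm{rk}(\mathfrak{s})>\mathrm{rk}(M)$. Define $\mathsf{V}_0=\{u\in\mathrm{Vars}(\varphi)\mid \mathfrak{t}\in\overline{M}u\}$; $\mathsf{V}_n=\{u\in\mathrm{Vars}(\varphi)\mid Mu\cap\{Mw\mid w\in\mathsf{V}_{n-1}\}\neq\emptyset\}$ for $n\ge1$; $M_0v=Mv\cup\{\mathfrak{s}\}$ if $v\in\mathsf{V}_0$ and $M_0v=Mv$ otherwise; for $n\ge1$, $M_nv=M_{n-1}v\cup\{M_{n-1}u\mid u\in\mathsf{V}_{n-1},\ Mu\in Mv\}$ if $v\in\mathsf{V}_n$ and $M_nv=M_{n-1}v$ otherwise. If $Mx\neq My$ for some $x,y\in\mathrm{Vars}(\varphi)$, then $M_nx\neq M_ny$ for every $n\in\mathbb{N}$.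
   Context: A set assignment is a map from a finite set of set variables into the von Neumann universe $\mathcal{V}=\bigcup_\alpha\mathcal{V}_\alpha$, $\mathcal{V}_\alpha=\bigcup_{\beta<\alpha}\mathcal{P}(\mathcal{V}_\beta)$; it satisfies $x\in y$ iff $Mx\in My$ and $x=y\setminus z$ iff $Mx=My\setminus Mz$. The rank $\mathrm{rk}(s)$ of a set $s$ is the least ordinal $\alpha$ with $s\subseteq\mathcal{V}_\alpha$, and $\mathrm{rk}(M)=\max\{\mathrm{rk}(Mx)\mid x\in\mathrm{dom}(M)\}$. *)

(* The von Neumann universe is modelled by Aczel's
   well-founded trees (sets = sup A f, with extensional equality). *)
From Stdlib Require Import List ClassicalEpsilon.
Import ListNotations.

Inductive zset : Type := sup : forall (A : Type), (A -> zset) -> zset.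

Definition idx (a : zset) : Type := match a with sup A _ => A end.
Definition elt (a : zset) : idx a -> zset := match a with sup _ f => f end.

Fixpoint zeq (a b : zset) {struct a} : Prop :=
  match a, b with
  | sup A f, sup B g =>
      (forall x : A, exists y : B, zeq (f x) (g y)) /\
      (forall y : B, exists x : A, zeq (f x) (g y))
  end.

Definition zin (a b : zset) : Prop := exists y : idx b, zeq a (elt b y).

Definition zunion (a b : zset) : zset :=
  sup (idx a + idx b)%type
      (fun s => match s with inl x => elt a x | inr y => elt b y end).

Definition zsingle (s : zset) : zset := sup unit (fun _ => s).

Definition zdiff (a b : zset) : zset :=
  sup {x : idx a | ~ zin (elt a x) b} (fun p => elt a (proj1_sig p)).

Definition zrepl {V : Type} (P : V -> Prop) (F : V -> zset) : zset :=
  sup {u : V | P u} (fun p => F (proj1_sig p)).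

(* Rank comparison.  rk(a) = sup { rk(x)+1 | x in a } (the least alpha with
   a ⊆ V_alpha); rk(a) <= rk(b) iff every x in a has some y in b with
   rk(x) <= rk(y). *)
Fixpoint rk_le (a b : zset) {struct a} : Prop :=
  match a with
  | sup A f => forall x : A, exists y : idx b, rk_le (f x) (elt b y)
  end.
Definition rk_lt (a b : zset) : Prop := exists y : idx b, rk_le a (elt b y).

Inductive literal (V : Type) : Type :=
  | LIn : V -> V -> literal V
  | LDiff : V -> V -> V -> literal V.
Arguments LIn {V}. Arguments LDiff {V}.

Definition lit_vars {V : Type} (l : literal V) : list V :=
  match l with LIn x y => [x; y] | LDiff x y z => [x; y; z] end.

Definition Vars {V : Type} (phi : list (literal V)) : list V :=
  flat_map lit_vars phi.

(* set assignment over Vars(phi): a map V -> zset, only its values on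
   Vars(phi) matter *)
Definition lit_sat {V : Type} (M : V -> zset) (l : literal V) : Prop :=
  match l with
  | LIn x y => zin (M x) (M y)
  | LDiff x y z => zeq (M x) (zdiff (M y) (M z))
  end.

Definition satisfies {V : Type} (M : V -> zset) (phi : list (literal V)) : Prop :=
  forall l, In l phi -> lit_sat M l.

(* rk(s) > rk(M) = max { rk(M v) | v in Vars(phi) } *)
Definition rank_gt_assign {V : Type} (s : zset) (M : V -> zset)
  (phi : list (literal V)) : Prop :=
  forall v, In v (Vars phi) -> rk_lt (M v) s.

Fixpoint Vset {V : Type} (phi : list (literal V)) (M Mb : V -> zset)
  (t : zset) (n : nat) : V -> Prop :=
  match n with
  | 0 => fun u => In u (Vars phi) /\ zin t (Mb u)
  | S k => fun u => In u (Vars phi) /\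
       exists w, Vset phi M Mb t k w /\ zin (M w) (M u)
  end.

Fixpoint Mseq {V : Type} (phi : list (literal V)) (M Mb : V -> zset)
  (t s : zset) (n : nat) : V -> zset :=
  match n with
  | 0 => fun v =>
      if excluded_middle_informative (Vset phi M Mb t 0 v)
      then zunion (M v) (zsingle s) else M v
  | S k => fun v =>
      if excluded_middle_informative (Vset phi M Mb t (S k) v)
      then zunion (Mseq phi M Mb t s k v)
             (zrepl (fun u => Vset phi M Mb t k u /\ zin (M u) (M v))
                    (Mseq phi M Mb t s k))
      else Mseq phi M Mb t s k v
  end.

(* Every element that the construction adds to [M v] is a set of rank at least
   rk(s): either [s] itself, or some [M_k u] with [u] in [V_k], which by
   induction contains such an element.  Every element of [M v] has rank below
   rk(s) > rk(M).  Hence [M v] is recovered from [M_n v] as the set of its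
   elements of rank below rk(s), so [M_n x = M_n y] forces [M x = M y]. *)
From Stdlib Require Import List ClassicalEpsilon.

Lemma zeq_refl a : zeq a a.
Proof. induction a as [A f IH]; simpl; split; intro x; exists x; apply IH. Qed.

Lemma zeq_sym a b : zeq a b -> zeq b a.
Proof.
  revert b; induction a as [A f IH]; intros [B g] [H1 H2]; simpl; split.
  - intro y; destruct (H2 y) as [x Hx]; exists x; apply IH; exact Hx.
  - intro x; destruct (H1 x) as [y Hy]; exists y; apply IH; exact Hy.
Qed.

Lemma zeq_trans a b c : zeq a b -> zeq b c -> zeq a c.
Proof.
  revert b c; induction a as [A f IH].
  intros [B g] [C h] [H1 H2] [K1 K2]; simpl; split.
  - intro x; destruct (H1 x) as [y Hy]; destruct (K1 y) as [z Hz]; eauto.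
  - intro z; destruct (K2 z) as [y Hy]; destruct (H2 y) as [x Hx]; eauto.
Qed.

Lemma zin_elt a i : zin (elt a i) a.
Proof. exists i; apply zeq_refl. Qed.

Lemma zin_zeq_r e a b : zeq a b -> zin e a -> zin e b.
Proof.
  destruct a as [A f], b as [B g]; intros [H1 _] [x Hx]; simpl in *.
  destruct (H1 x) as [y Hy]; exists y; eapply zeq_trans; eauto.
Qed.

Lemma zeq_ext a b :
  (forall e, zin e a -> zin e b) -> (forall e, zin e b -> zin e a) -> zeq a b.
Proof.
  destruct a as [A f], b as [B g]; intros Hab Hba; simpl; split.
  - intro x; exact (Hab _ (zin_elt (sup A f) x)).
  - intro y; destruct (Hba _ (zin_elt (sup B g) y)) as [x Hx].
    exists x; apply zeq_sym; exact Hx.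
Qed.

Lemma zin_zunion e a b : zin e (zunion a b) <-> zin e a \/ zin e b.
Proof.
  split.
  - intros [[x|y] H]; [left|right]; eexists; exact H.
  - intros [[x H]|[y H]]; [exists (inl x)|exists (inr y)]; exact H.
Qed.

Lemma zin_zsingle e s : zin e (zsingle s) -> zeq e s.
Proof. intros [[] H]; exact H. Qed.

Lemma zin_zrepl {V : Type} (P : V -> Prop) (F : V -> zset) e :
  zin e (zrepl P F) -> exists u, P u /\ zeq e (F u).
Proof. intros [[u Pu] H]; exists u; split; assumption. Qed.

Lemma rk_le_refl a : rk_le a a.
Proof. induction a as [A f IH]; simpl; intro x; exists x; apply IH. Qed.

Lemma rk_le_trans a b c : rk_le a b -> rk_le b c -> rk_le a c.
Proof.
  revert b c; induction a as [A f IH]; intros [B g] c H K; simpl in *.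
  intro x; destruct (H x) as [y Hy]; destruct (K y) as [z Hz]; eauto.
Qed.

Lemma zeq_rk_le a b : zeq a b -> rk_le a b.
Proof.
  revert b; induction a as [A f IH]; intros [B g] [H1 _]; simpl.
  intro x; destruct (H1 x) as [y Hy]; eauto.
Qed.

Lemma rk_le_elt a b i : rk_le a (elt b i) -> rk_le a b.
Proof.
  revert b i; induction a as [A f IH]; intros b i H; simpl in *.
  intro x; destruct (H x) as [y Hy]; exists i; eapply IH; eauto.
Qed.

Lemma rk_le_zin a e b : zin e b -> rk_le a e -> rk_le a b.
Proof.
  intros [i Hi] H; apply (rk_le_elt a b i).
  apply rk_le_trans with e; [exact H | apply zeq_rk_le; exact Hi].
Qed.

Lemma rk_lt_irrefl a : ~ rk_lt a a.
Proof.
  induction a as [A f IH]; intros [y Hy]; simpl in Hy.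
  destruct (Hy y) as [z Hz]; apply (IH y); exists z; exact Hz.
Qed.

Lemma rk_lt_zin a e s : rk_lt a s -> zin e a -> ~ rk_le s e.
Proof.
  intros [j Hj] Hea Hse; apply (rk_lt_irrefl s); exists j.
  apply rk_le_trans with a; [exact (rk_le_zin s e a Hea Hse) | exact Hj].
Qed.

Lemma zeq_rk_lt_ext s a b a' b' :
  rk_lt a s -> rk_lt b s ->
  (forall e, zin e a -> zin e a') -> (forall e, zin e b -> zin e b') ->
  (forall e, zin e a' -> zin e a \/ rk_le s e) ->
  (forall e, zin e b' -> zin e b \/ rk_le s e) ->
  zeq a' b' -> zeq a b.
Proof.
  intros Ha Hb Saa' Sbb' Ea' Eb' E; apply zeq_ext; intros e He.
  - destruct (Eb' e (zin_zeq_r _ _ _ E (Saa' e He))) as [H|H]; [exact H|].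
    exfalso; exact (rk_lt_zin _ _ _ Ha He H).
  - destruct (Ea' e (zin_zeq_r _ _ _ (zeq_sym _ _ E) (Sbb' e He))) as [H|H]; [exact H|].
    exfalso; exact (rk_lt_zin _ _ _ Hb He H).
Qed.

Section Mseq.

Variables (V : Type) (phi : list (literal V)) (M Mb : V -> zset) (t s : zset).

Notation Vn := (Vset phi M Mb t).
Notation Mn := (Mseq phi M Mb t s).

Lemma rk_le_Mseq_Vset k u : Vn k u -> rk_le s (Mn k u).
Proof.
  revert u; induction k as [|k IH]; intros u Hu; simpl;
    destruct (excluded_middle_informative _) as [_|]; try contradiction.
  - apply rk_le_zin with s; [|apply rk_le_refl].
    apply zin_zunion; right; exists tt; apply zeq_refl.
  - destruct Hu as [_ [w [Hw Hwu]]].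
    apply rk_le_zin with (Mn k w); [|exact (IH w Hw)].
    apply zin_zunion; right; exists (exist _ w (conj Hw Hwu)); apply zeq_refl.
Qed.

Lemma zin_Mseq n v e : zin e (M v) -> zin e (Mn n v).
Proof.
  intro H; induction n as [|n IH]; simpl;
    destruct (excluded_middle_informative _); try apply zin_zunion; auto.
Qed.

Lemma zin_Mseq_inv n v e : zin e (Mn n v) -> zin e (M v) \/ rk_le s e.
Proof.
  revert v e; induction n as [|n IH]; intros v e H; simpl in H;
    destruct (excluded_middle_informative _); auto.
  - destruct (proj1 (zin_zunion _ _ _) H) as [Hv|Hs]; [left; exact Hv|right].
    apply zeq_rk_le, zeq_sym, zin_zsingle; exact Hs.
  - destruct (proj1 (zin_zunion _ _ _) H) as [Hk|Hnew]; [exact (IH v e Hk)|right].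
    destruct (zin_zrepl _ _ _ Hnew) as [u [[Hu _] Heu]].
    apply rk_le_trans with (Mn n u);
      [exact (rk_le_Mseq_Vset n u Hu) | apply zeq_rk_le, zeq_sym; exact Heu].
Qed.

End Mseq.

Theorem corollary8 (V : Type) (phi : list (literal V)) (M Mb : V -> zset)
  (xb yb : V) (t s : zset) :
  satisfies M phi ->
  satisfies Mb phi ->
  In xb (Vars phi) -> In yb (Vars phi) ->
  ~ zeq (Mb xb) (Mb yb) ->
  ((zin t (Mb xb) /\ ~ zin t (Mb yb)) \/ (~ zin t (Mb xb) /\ zin t (Mb yb))) ->
  rank_gt_assign s M phi ->
  forall x y, In x (Vars phi) -> In y (Vars phi) ->
  ~ zeq (M x) (M y) ->
  forall n : nat, ~ zeq (Mseq phi M Mb t s n x) (Mseq phi M Mb t s n y).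
Proof.
  intros _ _ _ _ _ _ Hrk x y Hx Hy Hxy n E; apply Hxy.
  apply (zeq_rk_lt_ext s _ _ _ _ (Hrk x Hx) (Hrk y Hy)
           (zin_Mseq V phi M Mb t s n x) (zin_Mseq V phi M Mb t s n y)
           (zin_Mseq_inv V phi M Mb t s n x) (zin_Mseq_inv V phi M Mb t s n y) E).
Qed.
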